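(* Let $d\ge1$. Among all spherical $d$-simplices on $S^d$ with circumradius $R'$ and $\cos R'<1/\sqrt{d+1}$ that have all their vertices on their circumsphere, the regular simplex has minimal vertex diameter.
   Context: $S^d$ is the unit sphere in $\mathbb{R}^{d+1}$ and $\angle(x,y)=\arccos(x^Ty)$ is the spherical distance. A spherical $d$-simplex is $\mathrm{co}\{a_1,\dots,a_{d+1}\}=\{\sum\lambda_ia_i/\|\sum\lambda_ia_i\|:\lambda_i\ge0,\text{ not all }0\}$ with $a_1,\dots,a_{d+1}\in S^d$ linearly independent. It is regular if all $\angle(a_i,a_j)$, $i\ne j$, are equal. The circumradius $R'$ and circumcenter $C$ of a set are the radius and center of the smallest spherical cap $\{y\in S^d:\angle(C,y)\le\rho\}$ containing it; the circumsphere is the boundary of this cap. The vertex diameter $D_v$ of the simplex $\mathrm{co}\{a_1,\dots,a_{d+1}\}$ is defined as follows. For each $i$, let $a_i'$ be the intersection of the great circle through $a_i$ and $C$ with $\mathrm{co}\{a_1,\dots,a_{i-1},a_{i+1},\dots,a_{d+1}\}$. Then $D_v=\max_i\angle(a_i,a_i')$. *)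

From HB Require Import structures.
From mathcomp Require Import all_boot all_order all_algebra.
From mathcomp Require Import all_classical all_reals all_analysis.
Set Implicit Arguments. Unset Strict Implicit. Unset Printing Implicit Defensive.
Import Order.TTheory GRing.Theory Num.Theory.
Local Open Scope ring_scope.
Local Open Scope classical_set_scope.

Section SphDefs.
Variable R : realType.
Variable m : nat.  (* ambient dimension: points of S^d live in R^m, m = d+1 *)
Notation vec := 'rV[R]_m.

Definition dotv (u v : vec) : R := \sum_(k < m) u 0 k * v 0 k.
Definition normv (u : vec) : R := Num.sqrt (dotv u u).
Definition normalize (u : vec) : vec := (normv u)^-1 *: u.

Definition on_sphere (x : vec) : Prop := dotv x x = 1.

Definition sangle (x y : vec) : R := acos (dotv x y).

(* spherical convex hull of the points a i with P i:
   { sum lam_i a_i / || sum lam_i a_i || : lam_i >= 0, not all 0 } *)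
Definition spco n (a : 'I_n -> vec) (P : pred 'I_n) : set vec :=
  [set y | exists lam : 'I_n -> R,
     (forall i, 0 <= lam i) /\ (forall i, ~~ P i -> lam i = 0) /\
     (exists i, P i /\ lam i != 0) /\
     y = normalize (\sum_(i < n) lam i *: a i)].

Definition simplex_set n (a : 'I_n -> vec) : set vec := spco a predT.

Definition is_simplex n (a : 'I_n -> vec) : Prop :=
  (forall i, on_sphere (a i)) /\ row_free (\matrix_(i < n) a i).

Definition is_regular n (a : 'I_n -> vec) : Prop :=
  forall i j k l, i != j -> k != l -> sangle (a i) (a j) = sangle (a k) (a l).

Definition cap_contains (X : set vec) (C : vec) (rho : R) : Prop :=
  forall y, X y -> sangle C y <= rho.

Definition is_circum (X : set vec) (C : vec) (rho : R) : Prop :=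
  on_sphere C /\ cap_contains X C rho /\
  forall C' rho', on_sphere C' -> cap_contains X C' rho' -> rho <= rho'.

(* a_i' : the intersection of the great circle through a_i and C with
   the facet co{a_j : j <> i} (a point of the sphere in span(a_i, C)) *)
Definition opp_point n (a : 'I_n -> vec) (C : vec) (i : 'I_n) : vec :=
  xget 0 [set p | spco a (predC1 i) p /\
                  exists s t : R, p = s *: a i + t *: C].

Definition vertex_diam n (a : 'I_n -> vec) (C : vec) : R :=
  \big[Num.max/0]_(i < n) sangle (a i) (opp_point a C i).

End SphDefs.

From HB Require Import structures.
From mathcomp Require Import all_boot all_order all_algebra.
From mathcomp Require Import all_classical all_reals all_analysis.
From mathcomp Require Import ring lra.
Set Implicit Arguments. Unset Strict Implicit. Unset Printing Implicit Defensive.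
Import Order.TTheory GRing.Theory Num.Theory.
Local Open Scope ring_scope.

(* Write the circumcenter as [C = \sum_j lam_j a_j] and let [c = cos R'].  Minimality of the
   circumscribed cap forces [c > 0] and [lam_j >= 0] (otherwise [C] could be tilted towards all
   vertices at once), and [<C, C> = 1] gives [c \sum_j lam_j = 1].  The point [a_i'] is the
   normalization of [C - lam_i a_i], so [P_i = <a_i, a_i'>] is the negative root of
   [P^2 ((lam_i - c)^2 + 1 - c^2) = (lam_i - c)^2], which decreases as [lam_i] grows.  For a
   regular simplex every [lam_j] equals [1 / ((d + 1) c)], and some [lam_i] of [a] is at least
   this average, so the angle at that vertex of [a] dominates every angle of the regular
   simplex.  A regular simplex of circumradius [R'] exists because [c^2 (d + 1) < 1]. *)

Section DotProduct.
Variables (R : realType) (n : nat).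
Implicit Types u v w : 'rV[R]_n.

Lemma dotvC u v : dotv u v = dotv v u.
Proof. by apply: eq_bigr => k _; rewrite mulrC. Qed.

Lemma dotvDl u v w : dotv (u + v) w = dotv u w + dotv v w.
Proof. by rewrite /dotv -big_split; apply: eq_bigr => k _; rewrite mxE mulrDl. Qed.

Lemma dotvZl (a : R) u w : dotv (a *: u) w = a * dotv u w.
Proof. by rewrite /dotv mulr_sumr; apply: eq_bigr => k _; rewrite mxE mulrA. Qed.

Lemma dotvBl u v w : dotv (u - v) w = dotv u w - dotv v w.
Proof. by rewrite -scaleN1r dotvDl dotvZl mulN1r. Qed.

Lemma dotvDr u v w : dotv w (u + v) = dotv w u + dotv w v.
Proof. by rewrite dotvC dotvDl !(dotvC w). Qed.

Lemma dotvZr (a : R) u w : dotv w (a *: u) = a * dotv w u.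
Proof. by rewrite dotvC dotvZl dotvC. Qed.

Lemma dotvBr u v w : dotv w (u - v) = dotv w u - dotv w v.
Proof. by rewrite dotvC dotvBl !(dotvC w). Qed.

Lemma dotv0r u : dotv u 0 = 0.
Proof. by rewrite -(scale0r 0) dotvZr mul0r. Qed.

Lemma dotv_sumZl m (al : 'I_m -> R) (F : 'I_m -> 'rV[R]_n) w :
  dotv (\sum_(j < m) al j *: F j) w = \sum_(j < m) al j * dotv (F j) w.
Proof.
rewrite /dotv; under eq_bigr => l _ do rewrite summxE mulr_suml.
rewrite exchange_big /=; apply: eq_bigr => j _.
by rewrite mulr_sumr; apply: eq_bigr => l _; rewrite mxE mulrA.
Qed.

Lemma dotvv_ge0 u : 0 <= dotv u u.
Proof. by apply: sumr_ge0 => k _; rewrite -expr2 sqr_ge0. Qed.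

Lemma dotvv_eq0 u : (dotv u u == 0) = (u == 0).
Proof.
apply/idP/eqP => [|->]; last by rewrite dotv0r.
rewrite psumr_eq0 => [/allP u0|k _]; last by rewrite -expr2 sqr_ge0.
apply/rowP => k; have /u0 : k \in index_enum 'I_n by rewrite mem_index_enum.
by rewrite mulf_eq0 orbb mxE => /eqP.
Qed.

Lemma dotvv_gt0 u : (0 < dotv u u) = (u != 0).
Proof. by rewrite lt_def dotvv_ge0 dotvv_eq0 andbT. Qed.

Lemma dotv_sphere_bounds u v : on_sphere u -> on_sphere v -> -1 <= dotv u v <= 1.
Proof.
move=> hu hv; have := dotvv_ge0 (u - v); have := dotvv_ge0 (u + v).
rewrite dotvBl dotvDl !dotvBr !dotvDr hu hv (dotvC v u) => h1 h2.
by apply/andP; split; lra.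
Qed.

Lemma normalize_on_sphere v : v != 0 -> on_sphere (normalize v).
Proof.
rewrite -dotvv_gt0 => v0; rewrite /on_sphere /normalize /normv dotvZl dotvZr.
by rewrite mulrA -expr2 exprVn sqr_sqrtr ?ltW // mulVf // gt_eqF.
Qed.

Lemma normalize_id v : on_sphere v -> normalize v = v.
Proof. by rewrite /normalize /normv => ->; rewrite sqrtr1 invr1 scale1r. Qed.

Lemma dotv_delta_mx v j : dotv v (delta_mx 0 j) = v 0 j.
Proof.
rewrite /dotv (bigD1 j) //= big1 ?addr0 => [|l lj]; rewrite mxE eqxx /=.
  by rewrite eqxx mulr1.
by rewrite (negbTE lj) mulr0.
Qed.

Lemma dotv_const1 v : dotv v (const_mx 1) = \sum_l v 0 l.
Proof. by apply: eq_bigr => l _; rewrite mxE mulr1. Qed.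

Lemma dotv_const1_const1 : dotv (const_mx 1) (const_mx 1 : 'rV[R]_n) = n%:R.
Proof.
rewrite dotv_const1 (eq_bigr (fun _ => 1)) => [|l _]; last by rewrite mxE.
by rewrite sumr_const card_ord.
Qed.

Lemma sangle_ge0 u v : on_sphere u -> on_sphere v -> 0 <= sangle u v.
Proof. by move=> hu hv; apply/acos_ge0/dotv_sphere_bounds. Qed.

End DotProduct.

Section Acos.
Variable R : realType.

Lemma lt_acos (x y : R) : -1 <= x -> x < y -> y <= 1 -> acos y < acos x.
Proof.
move=> x_ge x_lt_y y_le.
have x_in : -1 <= x <= 1 by rewrite x_ge (le_trans (ltW x_lt_y) y_le).
have y_in : -1 <= y <= 1 by rewrite y_le (le_trans x_ge (ltW x_lt_y)).
have := @ltr_cos R (acos y) (acos x).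
rewrite !in_itv /= !acos_ge0 ?acos_lepi // => /(_ isT isT) <-.
by rewrite !acosK ?in_itv.
Qed.

Lemma le_acos (x y : R) : -1 <= x -> x <= y -> y <= 1 -> acos y <= acos x.
Proof.
move=> x_ge; rewrite le_eqVlt => /predU1P[-> //|x_lt_y] y_le.
exact/ltW/lt_acos.
Qed.

End Acos.

Lemma sumZ_delta (R : pzRingType) (V : lmodType R) n (F : 'I_n -> V) a :
  \sum_j ((j == a)%:R : R) *: F j = F a.
Proof.
rewrite (bigD1 a) //= eqxx scale1r big1 ?addr0 // => j /negbTE ->.
by rewrite scale0r.
Qed.

Lemma exists_ge_mean (R : realDomainType) n (f : 'I_n.+1 -> R) m :
  n.+1%:R * m <= \sum_i f i -> exists i, m <= f i.
Proof.
move=> le_sum; apply/not_existsP => f_lt.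
have : \sum_i f i < \sum_(i < n.+1) m.
  apply: ltr_sum => [|i _]; last by rewrite ltNge; apply/negP; exact: f_lt.
  by apply/hasP; exists ord0; rewrite ?mem_index_enum.
by rewrite sumr_const card_ord -mulr_natl ltNge le_sum.
Qed.

Section SimplexCoordinates.
Variables (R : realType) (n : nat) (x : 'I_n -> 'rV[R]_n).
Hypothesis x_simplex : is_simplex x.

Local Notation X := (\matrix_(i < n) x i).

Lemma simplex_mx_unit : X \in unitmx.
Proof. by rewrite -row_free_unit; exact: x_simplex.2. Qed.

Lemma sumZ_mulmx (al : 'I_n -> R) : \sum_j al j *: x j = (\row_j al j) *m X.
Proof. by rewrite mulmx_sum_row; apply: eq_bigr => j _; rewrite rowK mxE. Qed.

Lemma simplex_sumZ_inj (al be : 'I_n -> R) :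
  \sum_j al j *: x j = \sum_j be j *: x j -> forall j, al j = be j.
Proof.
rewrite !sumZ_mulmx => /(row_free_inj x_simplex.2) /rowP eq_ab j.
by have := eq_ab j; rewrite !mxE.
Qed.

Lemma simplex_sumZ_neq0 (al : 'I_n -> R) j : al j != 0 -> \sum_i al i *: x i != 0.
Proof.
apply: contra => /eqP sum0; apply/eqP.
have := @simplex_sumZ_inj al (fun=> 0); apply => //.
by rewrite sum0 big1 // => i _; rewrite scale0r.
Qed.

Lemma simplex_coords v : exists al : 'I_n -> R, v = \sum_j al j *: x j.
Proof.
exists (fun j => (v *m invmx X) 0 j); rewrite sumZ_mulmx.
have -> : \row_j (v *m invmx X) 0 j = v *m invmx X by apply/rowP => j; rewrite mxE.
by rewrite mulmxKV // simplex_mx_unit.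
Qed.

Lemma simplex_dual (f : 'I_n -> R) : exists w, forall j, dotv (x j) w = f j.
Proof.
exists (invmx X *m \col_j f j)^T => j.
have /colP/(_ j) := mulKVmx simplex_mx_unit (\col_j f j); rewrite [RHS]mxE => <-.
by rewrite !mxE; apply: eq_bigr => k _; rewrite !mxE.
Qed.

Lemma simplex_spco_on_sphere (P : pred 'I_n) y : spco x P y -> on_sphere y.
Proof.
by move=> [lam [_ [_ [[j [_ lamj]] ->]]]]; apply/normalize_on_sphere/(simplex_sumZ_neq0 lamj).
Qed.

Lemma cap_contains_simplex C c : on_sphere C -> 0 <= c ->
  (forall j, c <= dotv C (x j)) -> cap_contains (simplex_set x) C (acos c).
Proof.
move=> C1 c_ge0 Cx_ge y yP; have := simplex_spco_on_sphere yP.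
case: yP => lam [lam_ge0 [_ [[j0 [_ lam0]] ->]]] y1.
set v := \sum_i lam i *: x i; set S := \sum_i lam i.
have v_gt0 : 0 < dotv v v by rewrite dotvv_gt0 (simplex_sumZ_neq0 lam0).
have S_ge0 : 0 <= S by apply: sumr_ge0.
have cS_le : c * S <= dotv C v.
  rewrite dotvC dotv_sumZl mulr_sumr; apply: ler_sum => i _.
  by rewrite mulrC dotvC ler_wpM2l.
have vv_le : dotv v v <= S ^+ 2.
  rewrite {1}/v dotv_sumZl expr2 {1}/S mulr_suml; apply: ler_sum => i _.
  apply: ler_wpM2l => //; rewrite dotvC dotv_sumZl; apply: ler_sum => j _.
  rewrite -[leRHS]mulr1 ler_wpM2l //.
  by have /andP[] := dotv_sphere_bounds (x_simplex.1 j) (x_simplex.1 i).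
set N := normv v.
have N_gt0 : 0 < N by rewrite sqrtr_gt0.
have N_le : N <= S by rewrite -ler_sqr ?nnegrE ?(ltW N_gt0) // /N sqr_sqrtr // ltW.
have /andP[_ le1] := dotv_sphere_bounds C1 y1.
apply: le_acos; [lra | | exact: le1].
rewrite /normalize dotvZr -/N ler_pdivlMl //.
by apply: le_trans cS_le; rewrite mulrC ler_wpM2l.
Qed.

End SimplexCoordinates.

Section Circumcenter.
Variables (R : realType) (k : nat) (x : 'I_k.+1 -> 'rV[R]_k.+1).
Variables (C : 'rV[R]_k.+1) (r : R).
Hypothesis x_simplex : is_simplex x.
Hypothesis C_circum : is_circum (simplex_set x) C r.
Hypothesis x_on_circum : forall i, sangle C (x i) = r.

Lemma circum_dotv i : dotv C (x i) = cos r.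
Proof.
rewrite -(x_on_circum i) acosK // in_itv /=.
exact: dotv_sphere_bounds C_circum.1 (x_simplex.1 i).
Qed.

Lemma circum_radius : r = acos (cos r).
Proof. by rewrite -(circum_dotv ord0) -(x_on_circum ord0). Qed.

Lemma no_smaller_cap C' c : on_sphere C' -> 0 <= c -> cos r < c ->
  (forall j, c <= dotv C' (x j)) -> False.
Proof.
move=> C'1 c_ge0 c_gt Cx_ge.
have r_le := C_circum.2.2 _ _ C'1 (cap_contains_simplex x_simplex C'1 c_ge0 Cx_ge).
have /andP[_ c_le1] := dotv_sphere_bounds C'1 (x_simplex.1 ord0).
have /andP[le_c _] := dotv_sphere_bounds C_circum.1 (x_simplex.1 ord0).
rewrite circum_dotv in le_c; rewrite {1}circum_radius in r_le.
have := lt_le_trans (lt_acos le_c c_gt (le_trans (Cx_ge ord0) c_le1)) r_le.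
by rewrite ltxx.
Qed.

Lemma circum_cos_gt0 : 0 < cos r.
Proof.
rewrite ltNge; apply/negP => c_le0.
have [w xw1] := simplex_dual x_simplex (fun=> 1).
have w0 : w != 0.
  by apply/eqP => w0; have /eqP := xw1 ord0; rewrite w0 dotv0r eq_sym oner_eq0.
have w_gt0 : 0 < normv w by rewrite sqrtr_gt0 dotvv_gt0.
apply: (@no_smaller_cap (normalize w) (normv w)^-1).
- exact: normalize_on_sphere.
- by rewrite invr_ge0 ltW.
- by apply: le_lt_trans c_le0 _; rewrite invr_gt0.
- by move=> j; rewrite /normalize dotvZl dotvC xw1 mulr1.
Qed.

Section Coordinates.
Variable lam : 'I_k.+1 -> R.
Hypothesis C_coords : C = \sum_j lam j *: x j.

Lemma circum_coords_sum : cos r * \sum_j lam j = 1.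
Proof.
rewrite -C_circum.1 {1}C_coords dotv_sumZl mulr_sumr.
by apply: eq_bigr => j _; rewrite dotvC circum_dotv mulrC.
Qed.

Lemma no_ascent_direction u : dotv C u = 0 -> (forall j, 1 <= dotv (x j) u) -> False.
Proof.
move=> Cu0 xu_ge1; set c := cos r; have c_gt0 : 0 < c := circum_cos_gt0.
have u0 : u != 0 by apply: contraTneq (xu_ge1 ord0) => ->; rewrite dotv0r ler10.
have q_gt0 : 0 < dotv u u by rewrite dotvv_gt0.
set q := dotv u u in q_gt0; set eps := (c * q)^-1.
have eps_gt0 : 0 < eps by rewrite invr_gt0 mulr_gt0.
have eps_cq : eps * (c * q) = 1 by rewrite mulVf // gt_eqF // mulr_gt0.
set v := C + eps *: u.
have vv : dotv v v = 1 + eps ^+ 2 * q.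
  rewrite dotvDl !dotvDr !dotvZl !dotvZr (dotvC u C) Cu0 C_circum.1 -/q; ring.
have v0 : v != 0.
  by rewrite -dotvv_gt0 vv; have := mulr_gt0 (exprn_gt0 2 eps_gt0) q_gt0; lra.
have N_gt0 : 0 < normv v by rewrite sqrtr_gt0 dotvv_gt0.
have N2 : normv v ^+ 2 = 1 + eps ^+ 2 * q by rewrite sqr_sqrtr ?dotvv_ge0.
apply: (@no_smaller_cap (normalize v) ((c + eps) / normv v)).
- exact: normalize_on_sphere.
- by rewrite divr_ge0 ?ltW ?addr_gt0.
- (* [(c |v|)^2 = c^2 + c eps < (c + eps)^2], as [eps c q = 1] *)
  rewrite ltr_pdivlMr // -ltr_sqr ?nnegrE ?mulr_ge0 ?ltW ?addr_gt0 // exprMn N2.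
  have -> : c ^+ 2 * (1 + eps ^+ 2 * q) = c ^+ 2 + c * eps * (eps * (c * q)) by ring.
  rewrite eps_cq; nra.
- move=> j; rewrite /normalize dotvZl [_^-1 * _]mulrC ler_pM2r ?invr_gt0 //.
  rewrite dotvDl dotvZl circum_dotv -/c (dotvC u); have := xu_ge1 j; nra.
Qed.

Lemma circum_coords_ge0 j : 0 <= lam j.
Proof.
rewrite leNgt; apply/negP => lamj_lt0; set c := cos r.
have c_gt0 : 0 < c := circum_cos_gt0.
set t := (c * lam j)^-1.
have t_lt0 : t < 0 by rewrite invr_lt0 pmulr_rlt0.
have [u xu] := simplex_dual x_simplex (fun i => 1 - t * (i == j)%:R).
apply: (@no_ascent_direction u); last first.
  by move=> i; rewrite xu; case: (i == j); rewrite ?mulr1 ?mulr0; lra.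
suff : c * dotv C u = 0 by move/eqP; rewrite mulf_eq0 gt_eqF //= => /eqP.
rewrite C_coords dotv_sumZl.
under eq_bigr => i _ do rewrite xu mulrBr mulr1 mulrCA.
rewrite sumrB mulrBr circum_coords_sum (bigD1 j) //= eqxx mulr1 big1 ?addr0.
  by rewrite mulrCA /t mulVf ?subrr // mulf_neq0 ?(gt_eqF c_gt0) ?(lt_eqF lamj_lt0).
by move=> i /negbTE ->; rewrite !mulr0.
Qed.

Lemma circum_cos_mul_coord_le1 j : cos r * lam j <= 1.
Proof.
rewrite -circum_coords_sum; apply: ler_wpM2l; first exact/ltW/circum_cos_gt0.
by rewrite (bigD1 j) //= lerDl; apply: sumr_ge0 => i _; exact: circum_coords_ge0.
Qed.

End Coordinates.
End Circumcenter.

Section OppositePoint.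
Variables (R : realType) (n : nat) (x : 'I_n -> 'rV[R]_n).
Variables (C : 'rV[R]_n) (lam : 'I_n -> R) (c : R).
Hypothesis x_simplex : is_simplex x.
Hypothesis C_on_sphere : on_sphere C.
Hypothesis C_coords : C = \sum_j lam j *: x j.
Hypothesis lam_ge0 : forall j, 0 <= lam j.
Hypothesis C_dotv : forall j, dotv C (x j) = c.
Variable i : 'I_n.
Hypothesis c_lt_lami : c < lam i.

Lemma exists_other_coord : exists2 j, j != i & lam j != 0.
Proof.
have [//|no_other] := pselect (exists2 j, j != i & lam j != 0).
have C_eq : C = lam i *: x i.
  rewrite C_coords (bigD1 i) //= big1 ?addr0 // => j ji.
  by have [->|lamj] := eqVneq (lam j) 0; [rewrite scale0r | case: no_other; exists j].
have := C_dotv i; rewrite C_eq dotvZl x_simplex.1 mulr1 => lami_eq.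
by move: c_lt_lami; rewrite lami_eq ltxx.
Qed.

Lemma opp_pointP : spco x (predC1 i) (opp_point x C i) /\
  exists s t : R, opp_point x C i = s *: x i + t *: C.
Proof.
have [j ji lamj] := exists_other_coord.
pose lam' j := if j == i then 0 else lam j.
set w := C - lam i *: x i.
have sum_lam' : \sum_j lam' j *: x j = w.
  rewrite /w C_coords (bigD1 i) //= [in RHS](bigD1 i) //= /lam' eqxx scale0r add0r.
  rewrite addrAC subrr add0r.
  by apply: eq_bigr => l /negbTE ->.
have wP : [set p | spco x (predC1 i) p /\ exists s t : R, p = s *: x i + t *: C]%classic
    (normalize w).
  split; last first.
    exists (- ((normv w)^-1 * lam i)), (normv w)^-1.
    by rewrite /normalize /w scalerBr scalerA scaleNr addrC.
  exists lam'; split; first by move=> l; rewrite /lam'; case: ifP => // _; exact: lam_ge0.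
  split; first by move=> l /negPn /eqP ->; rewrite /lam' eqxx.
  by split; [exists j; rewrite /lam' (negbTE ji) | rewrite sum_lam'].
exact: (xgetPex 0 (ex_intro _ _ wP)).
Qed.

Lemma opp_point_scaled : exists2 t, 0 < t & opp_point x C i = t *: (C - lam i *: x i).
Proof.
have [[mu [mu_ge0 [mu_out [[j0 [j0i muj0]] p_eq]]]] [s [t p_st]]] := opp_pointP.
have mui : mu i = 0 by apply: mu_out; rewrite /= negbK.
have Ni_gt0 : 0 < (normv (\sum_j mu j *: x j))^-1.
  by rewrite invr_gt0 sqrtr_gt0 dotvv_gt0 (simplex_sumZ_neq0 x_simplex muj0).
set Ni := _^-1 in Ni_gt0 p_eq.
have coef : \sum_j (Ni * mu j) *: x j = \sum_j (s * (j == i)%:R + t * lam j) *: x j.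
  under eq_bigr do rewrite -scalerA; rewrite -scaler_sumr -[Ni *: _]/(normalize _) -p_eq p_st.
  under [RHS]eq_bigr do rewrite scalerDl -!scalerA.
  rewrite big_split -!scaler_sumr -C_coords /= (bigD1 i) //= eqxx scale1r big1 ?addr0 //.
  by move=> j /negbTE ->; rewrite scale0r.
have := simplex_sumZ_inj x_simplex coef i; rewrite mui mulr0 eqxx mulr1 => s_eq.
have := simplex_sumZ_inj x_simplex coef j0.
rewrite (negbTE j0i) mulr0 add0r => muj0_eq.
have t_gt0 : 0 < t.
  have : 0 < t * lam j0 by rewrite -muj0_eq mulr_gt0 // lt_def muj0 mu_ge0.
  by have := lam_ge0 j0; nra.
exists t => //; rewrite p_st scalerBr scalerA addrC -scaleNr.
by rewrite (_ : - (t * lam i) = s) //; lra.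
Qed.

Lemma opp_point_dotv : exists2 t, 0 < t &
  dotv (x i) (opp_point x C i) = t * (c - lam i) /\
  t ^+ 2 * ((lam i - c) ^+ 2 + (1 - c ^+ 2)) = 1.
Proof.
have [t t_gt0 p_eq] := opp_point_scaled.
have [p_spco _] := opp_pointP.
have p1 := simplex_spco_on_sphere x_simplex p_spco.
rewrite /on_sphere p_eq dotvZl dotvZr dotvBl !dotvBr !dotvZl !dotvZr in p1.
rewrite x_simplex.1 C_on_sphere (dotvC (x i)) C_dotv in p1.
exists t => //; split; last by rewrite -[RHS]p1; ring.
by rewrite p_eq dotvZr dotvBr dotvZr x_simplex.1 dotvC C_dotv mulr1.
Qed.

Lemma opp_point_dotv_lt0 : dotv (x i) (opp_point x C i) < 0.
Proof.
by have [t t_gt0 [-> _]] := opp_point_dotv; rewrite pmulr_rlt0 // subr_lt0.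
Qed.

Lemma opp_point_dotv_sqr : dotv (x i) (opp_point x C i) ^+ 2 *
  ((lam i - c) ^+ 2 + (1 - c ^+ 2)) = (lam i - c) ^+ 2.
Proof.
have [t _ [-> t_eq]] := opp_point_dotv.
by rewrite -[RHS]mulr1 -[in RHS]t_eq; ring.
Qed.

End OppositePoint.

(* [P = - u / sqrt (u ^+ 2 + K)], which decreases in [u]. *)
Lemma neg_root_antimono (R : realFieldType) (K u v P Q : R) : 0 < K -> 0 < v <= u ->
  P < 0 -> P ^+ 2 * (u ^+ 2 + K) = u ^+ 2 ->
  Q < 0 -> Q ^+ 2 * (v ^+ 2 + K) = v ^+ 2 -> -1 <= P <= Q.
Proof.
move=> K_gt0 /andP[v_gt0 v_le_u] P_lt0 P_eq Q_lt0 Q_eq.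
have P_K : (1 - P ^+ 2) * (u ^+ 2 + K) = K by rewrite mulrBl mul1r P_eq; ring.
have Q_K : (1 - Q ^+ 2) * (v ^+ 2 + K) = K by rewrite mulrBl mul1r Q_eq; ring.
have Dv_gt0 : 0 < v ^+ 2 + K by rewrite ltr_wpDl ?sqr_ge0.
have Dv_le_Du : v ^+ 2 + K <= u ^+ 2 + K by rewrite lerD2r; nra.
have P2_le1 : P ^+ 2 <= 1 by nra.
have Q2_le_P2 : Q ^+ 2 <= P ^+ 2.
  suff : (1 - P ^+ 2) * (v ^+ 2 + K) <= (1 - Q ^+ 2) * (v ^+ 2 + K) by rewrite ler_pM2r //; lra.
  by rewrite Q_K -[leRHS]P_K ler_wpM2l // subr_ge0.
apply/andP; split; nra.
Qed.

Section OppositeAngleComparison.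
Variables (R : realType) (k : nat) (r : R).
Variables (x y : 'I_k.+1 -> 'rV[R]_k.+1) (C D : 'rV[R]_k.+1) (lam mu : 'I_k.+1 -> R).
Hypotheses (x_simplex : is_simplex x) (y_simplex : is_simplex y).
Hypothesis C_circum : is_circum (simplex_set x) C r.
Hypothesis D_circum : is_circum (simplex_set y) D r.
Hypothesis x_on_circum : forall i, sangle C (x i) = r.
Hypothesis y_on_circum : forall i, sangle D (y i) = r.
Hypothesis C_coords : C = \sum_i lam i *: x i.
Hypothesis D_coords : D = \sum_i mu i *: y i.

Lemma opp_angle_le i j : cos r < mu j <= lam i ->
  sangle (y j) (opp_point y D j) <= sangle (x i) (opp_point x C i).
Proof.
move=> /andP[c_lt_muj muj_le_lami].
have c_lt_lami := lt_le_trans c_lt_muj muj_le_lami.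
have lam_ge0 := circum_coords_ge0 x_simplex C_circum x_on_circum C_coords.
have mu_ge0 := circum_coords_ge0 y_simplex D_circum y_on_circum D_coords.
have Cx := circum_dotv x_simplex C_circum x_on_circum.
have Dy := circum_dotv y_simplex D_circum y_on_circum.
have c_gt0 := circum_cos_gt0 x_simplex C_circum x_on_circum.
have K_gt0 : 0 < 1 - cos r ^+ 2.
  have := circum_cos_mul_coord_le1 y_simplex D_circum y_on_circum D_coords j; nra.
have /andP[le_P P_le_Q] : -1 <= dotv (x i) (opp_point x C i) <= dotv (y j) (opp_point y D j).
  apply: (neg_root_antimono K_gt0 _
    (opp_point_dotv_lt0 x_simplex C_circum.1 C_coords lam_ge0 Cx c_lt_lami)
    (opp_point_dotv_sqr x_simplex C_circum.1 C_coords lam_ge0 Cx c_lt_lami)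
    (opp_point_dotv_lt0 y_simplex D_circum.1 D_coords mu_ge0 Dy c_lt_muj)
    (opp_point_dotv_sqr y_simplex D_circum.1 D_coords mu_ge0 Dy c_lt_muj)).
  by rewrite subr_gt0 c_lt_muj lerD2r.
apply: le_acos le_P P_le_Q _.
exact/ltW/(lt_trans (opp_point_dotv_lt0 y_simplex D_circum.1 D_coords mu_ge0 Dy c_lt_muj)).
Qed.

Lemma opp_angle_ge0 i : cos r < lam i -> 0 <= sangle (x i) (opp_point x C i).
Proof.
move=> c_lt_lami; apply: sangle_ge0; first exact: x_simplex.1.
have lam_ge0 := circum_coords_ge0 x_simplex C_circum x_on_circum C_coords.
have Cx := circum_dotv x_simplex C_circum x_on_circum.
have [p_spco _] := opp_pointP x_simplex C_coords lam_ge0 Cx c_lt_lami.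
exact: (simplex_spco_on_sphere x_simplex p_spco).
Qed.

End OppositeAngleComparison.

Section RegularCircumcenter.
Variables (R : realType) (k : nat) (x : 'I_k.+1 -> 'rV[R]_k.+1).
Variables (C : 'rV[R]_k.+1) (r : R).
Hypothesis k_gt0 : (0 < k)%N.
Hypothesis x_simplex : is_simplex x.
Hypothesis x_regular : is_regular x.
Hypothesis C_circum : is_circum (simplex_set x) C r.
Hypothesis x_on_circum : forall i, sangle C (x i) = r.

Lemma regular_dotv : exists2 e, e != 1 & forall i j, i != j -> dotv (x i) (x j) = e.
Proof.
have ord0_max : ord0 != ord_max :> 'I_k.+1 by rewrite -val_eqE /= neq_ltn k_gt0.
exists (dotv (x ord0) (x ord_max)); last first.
  move=> i j ij; have /(congr1 cos) := x_regular ij ord0_max.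
  by rewrite !acosK // in_itv /=; apply: dotv_sphere_bounds; exact: x_simplex.1.
apply/eqP => e1.
have : \sum_j ((j == ord0)%:R - (j == ord_max)%:R) *: x j != 0 :> 'rV_k.+1.
  apply: (simplex_sumZ_neq0 x_simplex (j := ord0)).
  by rewrite eqxx (negbTE ord0_max) subr0 oner_neq0.
under eq_bigr do rewrite scalerBl; rewrite sumrB !sumZ_delta -dotvv_eq0.
rewrite dotvBl !dotvBr !x_simplex.1 (dotvC (x ord_max)) e1 => /negP; apply.
by apply/eqP; lra.
Qed.

Lemma regular_circum_coords lam : C = \sum_j lam j *: x j ->
  forall i, lam i = (cos r * k.+1%:R)^-1.
Proof.
move=> C_coords; have [e e_neq1 x_dotv] := regular_dotv.
have c_gt0 := circum_cos_gt0 x_simplex C_circum x_on_circum.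
have sum_lam := circum_coords_sum x_simplex C_circum x_on_circum C_coords.
have lam_e i : lam i * (1 - e) = cos r - e * \sum_j lam j.
  rewrite -(circum_dotv x_simplex C_circum x_on_circum i) C_coords dotv_sumZl.
  rewrite (bigD1 i) //= [\sum_j lam j](bigD1 i) //= x_simplex.1 mulr1.
  rewrite (eq_bigr (fun j => lam j * e)) => [|j ji]; last by rewrite x_dotv.
  by rewrite -mulr_suml; ring.
have lam_const i : lam i = lam ord0.
  by apply: (mulIf (_ : 1 - e != 0)); rewrite ?lam_e // subr_eq0 eq_sym.
have cN_neq0 : cos r * k.+1%:R != 0 by rewrite mulf_neq0 ?gt_eqF ?ltr0n.
have sum_const : \sum_j lam j = k.+1%:R * lam ord0.
  by rewrite (eq_bigr (fun=> lam ord0)) // sumr_const card_ord mulr_natl.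
rewrite sum_const mulrA in sum_lam.
by move=> i; rewrite lam_const -(mulKf cN_neq0 (lam ord0)) sum_lam mulr1.
Qed.

End RegularCircumcenter.

Section RegularSimplex.
Variables (R : realType) (k : nat) (c : R).
Hypothesis k_gt0 : (0 < k)%N.
Hypothesis c_gt0 : 0 < c.
Hypothesis c2N_lt1 : c ^+ 2 * k.+1%:R < 1.

Local Notation N := (k.+1%:R : R).
Local Notation one := (const_mx 1 : 'rV[R]_k.+1).

(* With center [one / sqrt N], the condition [dotv C (a j) = c] forces
   [N alpha + beta = c sqrt N], and then [on_sphere (a j)] forces
   [beta ^+ 2 = (1 - c ^+ 2) N / k]. *)
Definition reg_beta : R := Num.sqrt ((1 - c ^+ 2) * N / k%:R).
Definition reg_alpha : R := (c * Num.sqrt N - reg_beta) / N.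
Definition reg_vertex (j : 'I_k.+1) : 'rV[R]_k.+1 := reg_alpha *: one + reg_beta *: delta_mx 0 j.
Definition reg_center : 'rV[R]_k.+1 := (Num.sqrt N)^-1 *: one.

Local Notation alpha := reg_alpha.
Local Notation beta := reg_beta.

Lemma reg_c2_lt1 : c ^+ 2 < 1.
Proof. by apply: le_lt_trans c2N_lt1; rewrite ler_peMr ?sqr_ge0 // ler1n. Qed.

Lemma reg_beta2 : beta ^+ 2 = (1 - c ^+ 2) * N / k%:R.
Proof. by rewrite sqr_sqrtr // divr_ge0 ?mulr_ge0 ?ler0n //; have := reg_c2_lt1; lra. Qed.

Lemma reg_beta_gt0 : 0 < beta.
Proof. by rewrite sqrtr_gt0 divr_gt0 ?mulr_gt0 ?ltr0n //; have := reg_c2_lt1; lra. Qed.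

Lemma reg_alpha_beta : N * alpha + beta = c * Num.sqrt N.
Proof. by rewrite /reg_alpha mulrCA divff ?mulr1 ?pnatr_eq0 // subrK. Qed.

Lemma reg_vertex_dotv i j :
  dotv (reg_vertex i) (reg_vertex j) =
  alpha * (c * Num.sqrt N) + beta * alpha + beta ^+ 2 * (i == j)%:R.
Proof.
rewrite !dotvDl !dotvDr !dotvZl !dotvZr dotv_const1_const1 (dotvC (delta_mx 0 i)).
rewrite !dotv_delta_mx !mxE eqxx /= (eq_sym j) -[c * _]reg_alpha_beta; ring.
Qed.

Lemma reg_vertex_on_sphere j : on_sphere (reg_vertex j).
Proof.
have N_neq0 : N != 0 by rewrite pnatr_eq0.
have k_neq0 : k%:R != 0 :> R by rewrite pnatr_eq0 -lt0n.
rewrite /on_sphere reg_vertex_dotv eqxx mulr1.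
have -> : alpha * (c * Num.sqrt N) + beta * alpha + beta ^+ 2 =
    ((c * Num.sqrt N) ^+ 2 - beta ^+ 2) / N + beta ^+ 2 by rewrite /reg_alpha; field.
rewrite exprMn sqr_sqrtr ?ler0n // reg_beta2; field.
by rewrite k_neq0 addrC natr1 pnatr_eq0.
Qed.

Lemma reg_center_on_sphere : on_sphere reg_center.
Proof.
rewrite /on_sphere dotvZl dotvZr dotv_const1_const1 mulrA -expr2 exprVn sqr_sqrtr ?ler0n //.
by rewrite mulVf // pnatr_eq0.
Qed.

Lemma reg_center_dotv j : dotv reg_center (reg_vertex j) = c.
Proof.
rewrite dotvZl dotvDr !dotvZr dotv_const1_const1 dotv_delta_mx mxE mulr1 (mulrC alpha).
by rewrite reg_alpha_beta mulrCA mulVf ?mulr1 // gt_eqF // sqrtr_gt0 ltr0n.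
Qed.

Lemma sum_dotv_reg_vertex v :
  \sum_j dotv v (reg_vertex j) = c * Num.sqrt N * dotv v one.
Proof.
under eq_bigr do rewrite dotvDr !dotvZr dotv_delta_mx.
rewrite big_split /= sumr_const card_ord -mulr_sumr -dotv_const1 -reg_alpha_beta.
by rewrite -mulr_natl; ring.
Qed.

Lemma reg_simplex : is_simplex reg_vertex.
Proof.
split; first exact: reg_vertex_on_sphere.
apply/inj_row_free => v vM0.
have sum0 : \sum_j v 0 j *: reg_vertex j = 0.
  by rewrite sumZ_mulmx -[RHS]vM0; congr (_ *m _); apply/rowP => j; rewrite mxE.
have sum_v0 : \sum_j v 0 j = 0.
  have : \sum_j v 0 j * c = 0.
    rewrite -[RHS](dotv0r reg_center) -sum0 dotvC dotv_sumZl.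
    by apply: eq_bigr => j _; rewrite dotvC reg_center_dotv.
  by rewrite -mulr_suml => /eqP; rewrite mulf_eq0 (gt_eqF c_gt0) orbF => /eqP.
have : \sum_j v 0 j *: reg_vertex j =
    (alpha * \sum_j v 0 j) *: one + beta *: \sum_j v 0 j *: delta_mx 0 j.
  rewrite scaler_sumr mulr_sumr scaler_suml -big_split.
  by apply: eq_bigr => j _; rewrite scalerDr !scalerA mulrC (mulrC beta).
rewrite sum0 sum_v0 mulr0 scale0r add0r -row_sum_delta => /esym/eqP.
by rewrite scaler_eq0 (gt_eqF reg_beta_gt0) => /eqP.
Qed.

Lemma reg_regular : is_regular reg_vertex.
Proof.
by move=> i j i' j' ij i'j'; rewrite /sangle !reg_vertex_dotv (negbTE ij) (negbTE i'j').
Qed.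

Lemma reg_vertex_mem j : simplex_set reg_vertex (reg_vertex j).
Proof.
exists (fun l => (l == j)%:R); split; first by move=> l; rewrite ler0n.
split=> //; split; first by exists j; rewrite eqxx oner_neq0.
by rewrite sumZ_delta normalize_id //; exact: reg_vertex_on_sphere.
Qed.

Lemma reg_circum r : r = acos c -> is_circum (simplex_set reg_vertex) reg_center r.
Proof.
move=> ->; split; first exact: reg_center_on_sphere.
split.
  apply: (cap_contains_simplex reg_simplex reg_center_on_sphere (ltW c_gt0)) => j.
  by rewrite reg_center_dotv.
move=> C' rho C'1 cap_C'.
have /exists_ge_mean [j] : N * - c <= \sum_j - dotv C' (reg_vertex j).
  rewrite sumrN sum_dotv_reg_vertex mulrN lerN2.
  have -> : dotv C' one = Num.sqrt N * dotv C' reg_center.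
    by rewrite dotvZr mulrA mulfV ?mul1r // gt_eqF // sqrtr_gt0 ltr0n.
  have /andP[_ C'_le1] := dotv_sphere_bounds C'1 reg_center_on_sphere.
  have -> : c * Num.sqrt N * (Num.sqrt N * dotv C' reg_center) =
    c * Num.sqrt N ^+ 2 * dotv C' reg_center by ring.
  by rewrite sqr_sqrtr ?ler0n // (mulrC N) ler_piMr // mulr_ge0 ?ler0n // ltW.
rewrite lerN2 => dotj_le_c.
apply: le_trans (cap_C' _ (reg_vertex_mem j)); apply: le_acos dotj_le_c _.
  by have /andP[] := dotv_sphere_bounds C'1 (reg_vertex_on_sphere j).
by have := reg_c2_lt1; nra.
Qed.

End RegularSimplex.

Lemma sqrM_lt1 (R : rcfType) (a b : R) :
  0 < a -> 0 < b -> a < (Num.sqrt b)^-1 -> a ^+ 2 * b < 1.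
Proof.
move=> a_gt0 b_gt0 a_lt.
have sb_gt0 : 0 < Num.sqrt b by rewrite sqrtr_gt0.
have lt1 : a * Num.sqrt b < 1 by rewrite -(mulVf (lt0r_neq0 sb_gt0)) ltr_pM2r.
have : (a * Num.sqrt b) ^+ 2 < 1 by have := mulr_gt0 a_gt0 sb_gt0; nra.
by rewrite exprMn sqr_sqrtr ?ltW.
Qed.

Unset Implicit Arguments.

Theorem lemma3p5 (R : realType) (d : nat) (hd : (1 <= d)%N)
  (a : 'I_d.+1 -> 'rV[R]_d.+1) (C : 'rV[R]_d.+1) (R' : R) :
  is_simplex a ->
  is_circum (simplex_set a) C R' ->
  cos R' < (Num.sqrt (d.+1)%:R)^-1 ->
  (forall i, sangle C (a i) = R') ->
  (exists (b : 'I_d.+1 -> 'rV[R]_d.+1) (Cb : 'rV[R]_d.+1),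
      is_simplex b /\ is_regular b /\ is_circum (simplex_set b) Cb R' /\
      (forall i, sangle Cb (b i) = R'))
  /\
  (forall (b : 'I_d.+1 -> 'rV[R]_d.+1) (Cb : 'rV[R]_d.+1),
      is_simplex b -> is_regular b -> is_circum (simplex_set b) Cb R' ->
      (forall i, sangle Cb (b i) = R') ->
      vertex_diam b Cb <= vertex_diam a C).
Proof.
move=> a_simplex C_circum cos_lt a_on_circum.
have c_gt0 := circum_cos_gt0 a_simplex C_circum a_on_circum.
have c2N_lt1 := sqrM_lt1 c_gt0 (ltr0n _ d.+1) cos_lt.
have R'_eq := circum_radius a_simplex C_circum a_on_circum.
split.
  exists (reg_vertex (k:=d) (cos R')), (reg_center R d).
  split; first exact: (reg_simplex hd c_gt0 c2N_lt1).
  split; first exact: reg_regular.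
  split; first exact: (reg_circum hd c_gt0 c2N_lt1 R'_eq).
  by move=> i; rewrite /sangle reg_center_dotv -R'_eq.
move=> b Cb b_simplex b_regular Cb_circum b_on_circum.
have [lam C_coords] := simplex_coords a_simplex C.
have [mu Cb_coords] := simplex_coords b_simplex Cb.
have mu_eq := regular_circum_coords hd b_simplex b_regular Cb_circum b_on_circum Cb_coords.
have [i lami_ge] : exists i, (cos R' * d.+1%:R)^-1 <= lam i.
  apply: exists_ge_mean; rewrite -(mulKf (lt0r_neq0 c_gt0) (\sum_i lam i)).
  rewrite (circum_coords_sum a_simplex C_circum a_on_circum C_coords) mulr1.
  by rewrite invfM mulrCA mulfV ?mulr1.
have c_lt_mu j : cos R' < mu j.
  by rewrite mu_eq -[X in _ < X]mulr1 ltr_pdivlMl ?mulr_gt0 // mulrAC -expr2.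
have mu_le_lam j : mu j <= lam i by rewrite mu_eq.
have c_lt_lam : cos R' < lam i := lt_le_trans (c_lt_mu i) (mu_le_lam i).
apply: bigmax_le => [|j _]; apply: le_trans (le_bigmax _ _ i).
  exact: opp_angle_ge0 a_simplex C_circum a_on_circum C_coords _ c_lt_lam.
apply: (opp_angle_le a_simplex b_simplex C_circum Cb_circum
          a_on_circum b_on_circum C_coords Cb_coords).
by rewrite c_lt_mu mu_le_lam.
Qed.
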